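(* Let $q$ be a prime power, $N$ a subgroup of $S_3$, and $\mathcal{L}\subseteq\mathbb{F}_q^3$ a subset invariant under the action of $N$, i.e. $\mathcal{L}^N=\mathcal{L}$. Suppose that each orbit of the action of $N\times K$ on $\mathcal{A}_q$ contains an element $u$ which can be written as $u=\lambda h+\mu e_j$ for some $h\in\mathcal{L}$, $\lambda,\mu\in\mathbb{F}_q$ and $j\in\{1,2,3\}$. Then $\mathcal{L}\cup\{(1,1,1)\}$ is a short covering of $\mathbb{F}_q^3$.
   Context: $\mathbb{F}_q$ is the finite field with $q$ elements; $e_1,e_2,e_3$ are the standard basis vectors of $\mathbb{F}_q^3$. Hamming distance $d(u,v)=|\{i:u_i\ne v_i\}|$; $B(u)=\{v:d(u,v)\le1\}$; $E(u)=\bigcup_{\lambda\in\mathbb{F}_q}B(\lambda u)$. A set $\mathcal{H}\subseteq\mathbb{F}_q^3$ is a short covering of $\mathbb{F}_q^3$ if $\bigcup_{h\in\mathcal{H}}E(h)=\mathbb{F}_q^3$. $S_3$ acts on $\mathbb{F}_q^3$ by permuting coordinates; $K=\{(u_1,u_2,u_3)\mapsto(\lambda u_1,\lambda u_2,\lambda u_3):\lambda\in\mathbb{F}_q^*\}$; these actions commute, giving an action of $N\times K$ on $\mathbb{F}_q^3$. $\mathcal{A}_q=\{(u_1,u_2,u_3)\in\mathbb{F}_q^3: u_1,u_2,u_3 \text{ pairwise distinct}\}$, which is invariant under $S_3\times K$. *)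

From HB Require Import structures.
From mathcomp Require Import all_boot all_order all_fingroup all_algebra.
Set Implicit Arguments. Unset Strict Implicit. Unset Printing Implicit Defensive.
Import GRing.Theory.
Local Open Scope ring_scope.

Section Defs.
Variable F : finFieldType.

Definition hdist (u v : 'rV[F]_3) : nat := #|[set i : 'I_3 | u 0 i != v 0 i]|.

Definition ball1 (u : 'rV[F]_3) : {set 'rV[F]_3} := [set v | (hdist u v <= 1)%N].

Definition Eset (u : 'rV[F]_3) : {set 'rV[F]_3} :=
  \bigcup_(lam : F) ball1 (lam *: u).

Definition short_covering (H : {set 'rV[F]_3}) : Prop :=
  \bigcup_(h in H) Eset h = [set: 'rV[F]_3].

Definition evec (j : 'I_3) : 'rV[F]_3 := delta_mx 0 j.

Definition permv (s : {perm 'I_3}) (u : 'rV[F]_3) : 'rV[F]_3 :=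
  \row_i u 0 ((s^-1)%g i).

Definition Aq : {set 'rV[F]_3} :=
  [set u : 'rV[F]_3 | [&& u 0 0 != u 0 1, u 0 0 != u 0 2 & u 0 1 != u 0 2]].

Definition ones : 'rV[F]_3 := const_mx 1.

Definition orbitNK (N : {group {perm 'I_3}}) (u : 'rV[F]_3) : {set 'rV[F]_3} :=
  [set lam *: permv s u | s in N, lam in [set x : F | x != 0]].

End Defs.

From HB Require Import structures.
From mathcomp Require Import all_boot all_order all_fingroup all_algebra.
Set Implicit Arguments. Unset Strict Implicit. Unset Printing Implicit Defensive.
Import GRing.Theory.
Local Open Scope ring_scope.

(* The sets E(h) are invariant under N x K: scaling and permuting coordinates
   do not increase Hamming distances, and they carry the lines through h to the
   lines through the transformed vector. Hence a vector w of A_q lies in E(h')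
   for h' = s^-1 h in L as soon as some element lam h + mu e_j of its orbit does,
   which it does since it differs from lam h in the j-th coordinate only.
   A vector with two equal coordinates c lies in B(c (1,1,1)). *)

Section ShortCovering.
Variable F : finFieldType.
Implicit Types (u v w h : 'rV[F]_3) (c : F) (s : {perm 'I_3}).

Lemma hdist_le_card u v (D : {set 'I_3}) :
  {in ~: D, forall i, u 0 i = v 0 i} -> (hdist u v <= #|D|)%N.
Proof.
move=> eq_uv; apply: subset_leq_card; apply/subsetP => i; rewrite inE.
by apply: contraR => iD; rewrite eq_uv ?inE.
Qed.

Lemma EsetP h w : reflect (exists c, hdist (c *: h) w <= 1)%N (w \in Eset h).
Proof.
apply: (iffP bigcupP) => [[c _] | [c]]; first by rewrite inE; exists c.
by exists c; rewrite ?inE.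
Qed.

Lemma hdist_scale c u v : (hdist (c *: u) (c *: v) <= hdist u v)%N.
Proof.
apply: hdist_le_card => i; rewrite !inE negbK => /eqP eq_uv.
by rewrite !mxE eq_uv.
Qed.

Lemma permvE s u i : permv s u 0 i = u 0 ((s^-1)%g i).
Proof. by rewrite mxE. Qed.

Lemma permvZ s c u : permv s (c *: u) = c *: permv s u.
Proof. by apply/rowP => i; rewrite !(mxE, permvE). Qed.

Lemma permvK s : cancel (@permv F s) (permv (s^-1)%g).
Proof. by move=> u; apply/rowP => i; rewrite !permvE invgK permK. Qed.

Lemma hdist_permv s u v : hdist (permv s u) (permv s v) = hdist u v.
Proof.
rewrite /hdist -[in RHS](card_preimset _ (@perm_inj _ (s^-1)%g)).
by apply: eq_card => i; rewrite !inE !permvE.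
Qed.

Lemma mem_Eset_scale c h u : u \in Eset h -> c *: u \in Eset h.
Proof.
case/EsetP => a le_a; apply/EsetP; exists (c * a).
by rewrite -scalerA; apply: leq_trans (hdist_scale _ _ _) le_a.
Qed.

Lemma mem_Eset_permv s h u : u \in Eset h -> permv s u \in Eset (permv s h).
Proof. by case/EsetP => a le_a; apply/EsetP; exists a; rewrite -permvZ hdist_permv. Qed.

Lemma mem_Eset_orbit (N : {group {perm 'I_3}}) h u v :
  v \in orbitNK N u -> v \in Eset h ->
  exists2 s, s \in N & u \in Eset (permv s h).
Proof.
case/imset2P => s lam sN; rewrite inE => lam_neq0 -> vE.
exists (s^-1)%g; first by rewrite groupV.
rewrite -(permvK s u) -[permv s u](scalerK lam_neq0).
exact/mem_Eset_permv/mem_Eset_scale.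
Qed.

Lemma mem_Eset_add_evec h c mu j : c *: h + mu *: evec F j \in Eset h.
Proof.
apply/EsetP; exists c; apply: leq_trans (eq_leq (cards1 j)).
apply: hdist_le_card => i.
by rewrite !inE => /negPf ij; rewrite !mxE ij andbF mulr0 addr0.
Qed.

Lemma mem_Eset_ones_eq_coord w i j :
  i != j -> w 0 i = w 0 j -> w \in Eset (ones F).
Proof.
move=> ij wij; apply/EsetP; exists (w 0 i).
have cardC : #|~: [set i; j]| = 1%N.
  by apply/eqP; rewrite -(eqn_add2l #|[set i; j]|) cardsC cards2 ij card_ord.
apply: leq_trans (eq_leq cardC); apply: hdist_le_card => k.
by rewrite setCK !inE !mxE mulr1 => /orP[] /eqP ->.
Qed.

Lemma notAq_mem_Eset_ones w : w \notin Aq F -> w \in Eset (ones F).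
Proof.
rewrite inE !negb_and !negbK => /or3P[] /eqP eq_w;
  exact: mem_Eset_ones_eq_coord eq_w.
Qed.

End ShortCovering.

Theorem theorem22 (F : finFieldType) (N : {group {perm 'I_3}})
    (L : {set 'rV[F]_3}) :
  (forall s, s \in N -> [set permv s h | h in L] = L) ->
  (forall u, u \in Aq F ->
     exists2 v, v \in orbitNK N u &
       exists h, exists lam : F, exists mu : F, exists j : 'I_3,
         h \in L /\ v = lam *: h + mu *: evec F j) ->
  short_covering (ones F |: L).
Proof.
move=> L_inv L_orbits; apply/setP => w; rewrite inE; apply/bigcupP.
have [wA | /notAq_mem_Eset_ones wE] := boolP (w \in Aq F); last first.
  by exists (ones F); rewrite ?setU11.
have [v vO [h [lam [mu [j [hL vE]]]]]] := L_orbits w wA.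
have vEh : v \in Eset h by rewrite vE mem_Eset_add_evec.
have [s sN wE] := mem_Eset_orbit vO vEh.
exists (permv s h) => //; rewrite setU1r // -(L_inv s sN); exact: imset_f.
Qed.
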